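(* Let $G$ be a digraph and $G'$ a subgraph of $G$. Then $\mathrm{sstat}_{\mathtt{vsc}}(G')\le\mathrm{sstat}_{\mathtt{vsc}}(G)$, and $\mathrm{lifo}_{\mathbf{gv}}(G')\le\mathrm{lifo}_{\mathbf{gv}}(G)$ for every $\mathbf{gv}\in\{\mathtt{i},\mathtt{isc},\mathtt{v},\mathtt{vsc},\mathtt{mi},\mathtt{misc},\mathtt{mv},\mathtt{mvsc}\}$.
   Context: All digraphs are finite, simple, without self-loops and have at least one vertex (induced subgraphs appearing as game data may be empty). For a finite set $V$, $V^*$ is the set of finite words over $V$, $\epsilon$ the empty word; $X \preceq Y$ means $X$ is a prefix of $Y$; for $X=a_1\cdots a_n$, $|X|=n$ and $\mathrm{let}(X)=\{a_1,\dots,a_n\}$. $A\Delta B$ is symmetric difference. For $X\subseteq V(G)$, $G\setminus X$ is the subgraph induced by $V(G)\setminus X$. Induced subgraphs are identified with their vertex sets. An initial component of a digraph $H$ is a strongly connected component $C$ with no edge from $H\setminus C$ into $C$. A subgraph $H\subseteq G$ is successor-closed if there is no edge of $G$ from $H$ to $G\setminus H$. LIFO-search game on $G$. A position is a pair $(X,R)$ with $X\in V(G)^*$ and $R$ a (possibly empty) induced subgraph of $G\setminus\mathrm{let}(X)$. It is an $\mathtt{i}$-position if $R$ is successor-closed; an $\mathtt{isc}$-position if $R$ is a union of strongly connected components of $G\setminus\mathrm{let}(X)$; a $\mathtt{v}$-position if $R$ is successor-closed and has a unique initial component; a $\mathtt{vsc}$-position if $R$ is a strongly connected component of $G\setminus\mathrm{let}(X)$.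 For $\mathbf{gv}\in\{\mathtt{i},\mathtt{isc},\mathtt{v},\mathtt{vsc}\}$, a $\mathbf{gv}$-position $(X',R')$ is a $\mathbf{gv}$-successor of $(X,R)$ if ($X\preceq X'$ or $X'\preceq X$), $|\mathrm{let}(X)\Delta\mathrm{let}(X')|=1$, and: for $\mathbf{gv}\in\{\mathtt{i},\mathtt{v}\}$, every $v'\in R'$ is reachable by a directed path in $G\setminus(\mathrm{let}(X)\cap\mathrm{let}(X'))$ from some $v\in R$; for $\mathbf{gv}\in\{\mathtt{isc},\mathtt{vsc}\}$, every $v'\in R'$ lies in the same strongly connected component of $G\setminus(\mathrm{let}(X)\cap\mathrm{let}(X'))$ as some $v\in R$. For $\mathbf{gv}\in\{\mathtt{v},\mathtt{vsc}\}$, if $(\epsilon,G)$ is not a $\mathbf{gv}$-position it is nevertheless admitted as a special position whose $\mathbf{gv}$-successors are exactly the $\mathbf{gv}$-positions of the form $(\epsilon,R)$. A $\mathbf{gv}$-search from $(X_0,R_0)$ is a finite or infinite sequence of $\mathbf{gv}$-positions $(X_0,R_0),(X_1,R_1),\dots$ with each $(X_{i+1},R_{i+1})$ a $\mathbf{gv}$-successor of $(X_i,R_i)$; it is complete if it is infinite or $R_n=\emptyset$ for some $n$, and a complete search is winning for the searchers if $R_n=\emptyset$ for some $n$. A complete search from $(\epsilon,G)$ is monotone if $R_{i+1}\subseteq R_i$ for all $i$; searcher-stationary if $X_i\preceq X_{i+1}$ for all $i$ with $R_i\neq\emptyset$; uses at most $k$ searchers if $|X_i|\le k$ for all $i$.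 A (searcher) $\mathbf{gv}$-strategy is a function $\sigma$ from $\mathbf{gv}$-positions to $V(G)^*$ such that $\sigma(X,R)$ is the first component of some $\mathbf{gv}$-successor of $(X,R)$; a search is consistent with $\sigma$ if $X_{i+1}=\sigma(X_i,R_i)$ for all $i$. $\sigma$ is winning if every complete consistent search from $(\epsilon,G)$ is winning for the searchers; it is monotone / searcher-stationary / uses at most $k$ searchers if every complete consistent search from $(\epsilon,G)$ has that property. $\mathrm{lifo}_{\mathbf{gv}}(G)$ (resp. $\mathrm{lifo}_{\mathtt{m}\mathbf{gv}}(G)$) is the minimum $k$ such that there is a winning (resp. monotone winning) $\mathbf{gv}$-strategy on $G$ using at most $k$ searchers; $\mathrm{sstat}_{\mathtt{vsc}}(G)$ is the minimum $k$ such that there is a searcher-stationary winning $\mathtt{vsc}$-strategy on $G$ using at most $k$ searchers. *)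

From mathcomp Require Import all_boot.
From Stdlib Require Import ClassicalEpsilon.
Set Implicit Arguments. Unset Strict Implicit. Unset Printing Implicit Defensive.

Section LIFO.
Variable T : finType.

Record digraph := Digraph { dV : {set T}; dE : rel T }.

(* finite, simple (rel), no self-loops, at least one vertex *)
Definition wf_digraph (G : digraph) : Prop :=
  [/\ dV G != set0,
      (forall x y, dE G x y -> (x \in dV G) && (y \in dV G))
    & (forall x, ~~ dE G x x)].

Definition subgraph (G' G : digraph) : Prop :=
  dV G' \subset dV G /\ (forall x y, dE G' x y -> dE G x y).

Definition reach (G : digraph) (W : {set T}) (u v : T) : bool :=
  (u \in W) && connect [rel x y | [&& x \in W, y \in W & dE G x y]] u v.

Definition samescc G W u v : bool := reach G W u v && reach G W v u.

Definition is_scc G (W C : {set T}) : Prop :=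
  exists2 u, u \in W & C = [set v | samescc G W u v].

Definition succ_closed G (W R : {set T}) : Prop :=
  R \subset W /\ forall x y, x \in R -> y \in W -> dE G x y -> y \in R.

Definition union_scc G (W R : {set T}) : Prop :=
  R \subset W /\ forall u v, u \in R -> samescc G W u v -> v \in R.

Definition initial_comp G (R C : {set T}) : Prop :=
  is_scc G R C /\ forall x y, x \in R :\: C -> y \in C -> ~~ dE G x y.

Definition unique_initial G (R : {set T}) : Prop :=
  exists C, initial_comp G R C /\ forall C', initial_comp G R C' -> C' = C.

Inductive game_variant := Vi | Visc | Vv | Vvsc.

Definition letX (X : seq T) : {set T} := [set x in X].

Definition pos := (seq T * {set T})%type.

Definition is_gvpos (gv : game_variant) (G : digraph) (X : seq T) (R : {set T}) : Prop :=
  let W := dV G :\: letX X in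
  [/\ all (mem (dV G)) X, R \subset W &
  match gv with
  | Vi => succ_closed G W R
  | Visc => union_scc G W R
  | Vv => R = set0 \/ (succ_closed G W R /\ unique_initial G R)
  | Vvsc => R = set0 \/ is_scc G W R
  end].

Definition is_special gv G (X : seq T) (R : {set T}) : Prop :=
  (gv = Vv \/ gv = Vvsc) /\ X = [::] /\ R = dV G /\ ~ is_gvpos gv G [::] (dV G).

Definition is_pos gv G X R : Prop := is_gvpos gv G X R \/ is_special gv G X R.

Definition reg_succ gv G (p p' : pos) : Prop :=
  let: (X, R) := p in let: (X', R') := p' in
  let W0 := dV G :\: (letX X :&: letX X') in
  [/\ is_gvpos gv G X' R',
      prefix X X' || prefix X' X,
      #|(letX X :\: letX X') :|: (letX X' :\: letX X)| = 1 &
      forall v', v' \in R' -> exists2 v, v \in R &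
        match gv with
        | Vi | Vv => reach G W0 v v'
        | Visc | Vvsc => samescc G W0 v v'
        end].

Definition gv_succ gv G (p p' : pos) : Prop :=
  (is_special gv G p.1 p.2 -> p'.1 = [::] /\ is_gvpos gv G p'.1 p'.2) /\
  (~ is_special gv G p.1 p.2 -> reg_succ gv G p p').

Definition is_strategy gv G (sigma : seq T -> {set T} -> seq T) : Prop :=
  forall X R, is_pos gv G X R -> exists R', gv_succ gv G (X, R) (sigma X R, R').

(* a search is s restricted to indices i with inb o i; o = None: infinite *)
Definition inb (o : option nat) (i : nat) : bool :=
  if o is Some n then i < n else true.

Definition consistent_search gv G sigma (s : nat -> pos) (o : option nat) : Prop :=
  [/\ inb o 0, s 0 = ([::], dV G),
      (forall i, inb o i -> is_pos gv G (s i).1 (s i).2) &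
      (forall i, inb o i.+1 ->
         gv_succ gv G (s i) (s i.+1) /\ (s i.+1).1 = sigma (s i).1 (s i).2)].

Definition complete_search (s : nat -> pos) (o : option nat) : Prop :=
  o = None \/ exists2 i, inb o i & (s i).2 = set0.

Definition winning_search (s : nat -> pos) (o : option nat) : Prop :=
  exists2 i, inb o i & (s i).2 = set0.

Definition monotone_search (s : nat -> pos) (o : option nat) : Prop :=
  forall i, inb o i.+1 -> (s i.+1).2 \subset (s i).2.

Definition stationary_search (s : nat -> pos) (o : option nat) : Prop :=
  forall i, inb o i.+1 -> (s i).2 != set0 -> prefix (s i).1 (s i.+1).1.

Definition k_search (k : nat) (s : nat -> pos) (o : option nat) : Prop :=
  forall i, inb o i -> size (s i).1 <= k.

Definition strat_has gv G sigma (P : (nat -> pos) -> option nat -> Prop) : Prop :=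
  forall s o, consistent_search gv G sigma s o -> complete_search s o -> P s o.

Definition minnat (P : nat -> Prop) : nat :=
  epsilon (inhabits 0) (fun k => P k /\ forall j, P j -> k <= j).

(* m = true : monotone variant (mi, misc, mv, mvsc) *)
Definition lifo (m : bool) (gv : game_variant) (G : digraph) : nat :=
  minnat (fun k => exists sigma, [/\ is_strategy gv G sigma,
     strat_has gv G sigma winning_search,
     strat_has gv G sigma (k_search k) &
     (m -> strat_has gv G sigma monotone_search)]).

Definition sstat_vsc (G : digraph) : nat :=
  minnat (fun k => exists sigma, [/\ is_strategy Vvsc G sigma,
     strat_has Vvsc G sigma winning_search,
     strat_has Vvsc G sigma (k_search k) &
     strat_has Vvsc G sigma stationary_search]).

End LIFO.

From mathcomp Require Import all_boot zify.
From Stdlib Require Import Classical ClassicalEpsilon.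
Set Implicit Arguments. Unset Strict Implicit. Unset Printing Implicit Defensive.

(* A strategy on G is turned into one on the subgraph G' with the same resources.
   Since there are finitely many positions, the G'-game in which the searchers must
   respect the bound, monotonicity and stationarity is determined: either the
   searchers force capture within a bounded number of moves, and a fastest-winning
   choice of moves is the required strategy, or the robber has a region from which
   he can never be caught.  In the latter case the robber on G plays against the
   given strategy as a shadow of the G'-robber: searcher stacks are restricted to
   V(G') (keeping first occurrences), each G-move induces at most one G'-move, and
   the G-robber occupies the closure in G of the G'-robber's region.  This yields a
   complete consistent play on G in which the robber is never caught. *)

Section Reachability.
Variable T : finType.
Implicit Types (G : digraph T) (W R S : {set T}).

Lemma connect_ind (e : rel T) (P : T -> Prop) x :
  P x -> (forall y z, P y -> e y z -> P z) -> forall y, connect e x y -> P y.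
Proof.
move=> Px step y /connectP[p]; elim: p x Px => [|z p IH] x Px /=; first by move=> _ ->.
by case/andP=> exz pz ey; apply: IH (step _ _ Px exz) pz ey.
Qed.

Lemma connect_cross (e : rel T) (A : pred T) x y :
  connect e x y -> ~~ A x -> A y -> exists u v, [/\ e u v, ~~ A u & A v].
Proof.
move=> c nAx Ay.
suff [/negP//|//] : ~~ A y \/ exists u v, [/\ e u v, ~~ A u & A v].
apply: (connect_ind (P := fun z => ~~ A z \/ _)) c; first by left.
move=> z w [nz|ex] ezw; last by right.
by case Aw: (A w); [right; exists z, w|left].
Qed.

Lemma reach_in G W u v : reach G W u v -> u \in W /\ v \in W.
Proof.
case/andP=> uW c; split => //.
by apply: (connect_ind (P := fun y => y \in W)) c => // y z _ /and3P[].
Qed.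

Lemma reach_refl G W u : u \in W -> reach G W u u.
Proof. by move=> uW; rewrite /reach uW connect0. Qed.

Lemma reach_trans G W u v w : reach G W u v -> reach G W v w -> reach G W u w.
Proof. by case/andP=> uW c1 /andP[_ c2]; rewrite /reach uW (connect_trans c1 c2). Qed.

Lemma reach_step G W u v w : reach G W u v -> w \in W -> dE G v w -> reach G W u w.
Proof.
move=> r wW e; apply: (reach_trans r); have [_ vW] := reach_in r.
by rewrite /reach vW connect1 //= vW wW.
Qed.

Lemma reach_edge G W v w : v \in W -> w \in W -> dE G v w -> reach G W v w.
Proof. by move=> vW wW e; apply: reach_step (reach_refl _ vW) wW e. Qed.

Lemma reach_sub G1 G2 W1 W2 u v :
  W1 \subset W2 -> (forall x y, dE G1 x y -> dE G2 x y) ->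
  reach G1 W1 u v -> reach G2 W2 u v.
Proof.
move=> sW sE /andP[uW c]; rewrite /reach (subsetP sW _ uW) /=.
apply: connect_sub c => x y /and3P[xW yW e]; apply: connect1.
by rewrite /= (subsetP sW _ xW) (subsetP sW _ yW) sE.
Qed.

Lemma reach_closed G W R u v : succ_closed G W R ->
  u \in R -> reach G W u v -> reach G R u v.
Proof.
move=> [sRW cl] uR /andP[uW c].
apply: (connect_ind (P := reach G R u)) c; first exact: reach_refl.
move=> y z ry /and3P[yW zW e]; have [_ yR] := reach_in ry.
exact: reach_step ry (cl _ _ yR zW e) e.
Qed.

Lemma reach_split G W b x y : reach G W x y ->
  reach G (W :\ b) x y \/ (reach G W x b /\ reach G W b y).
Proof.
move=> r; have [xW _] := reach_in r; case/andP: r => _.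
apply: (connect_ind (P := fun y => reach G (W :\ b) x y \/ _)).
  have [<-|nb] := eqVneq x b; first by right; split; apply: reach_refl.
  by left; apply: reach_refl; rewrite !inE nb.
move=> z w [r|[r1 r2]] /and3P[zW wW e]; last by right; split => //; apply: reach_step r2 wW e.
have [ewb|nb] := eqVneq w b; last by left; apply: reach_step r _ e; rewrite !inE nb.
right; rewrite -ewb; split; last exact: reach_refl.
by apply: reach_step _ wW e; apply: reach_sub r => //; apply: subsetDl.
Qed.

Lemma scc_in G W u v : samescc G W u v -> u \in W /\ v \in W.
Proof. by case/andP=> /reach_in. Qed.

Lemma scc_refl G W u : u \in W -> samescc G W u u.
Proof. by move=> uW; rewrite /samescc reach_refl. Qed.

Lemma scc_sym G W u v : samescc G W u v = samescc G W v u.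
Proof. by rewrite /samescc andbC. Qed.

Lemma scc_trans G W u v w : samescc G W u v -> samescc G W v w -> samescc G W u w.
Proof. by case/andP=> a b /andP[c d]; rewrite /samescc (reach_trans a c) (reach_trans d b). Qed.

Lemma scc_sub G1 G2 W1 W2 u v :
  W1 \subset W2 -> (forall x y, dE G1 x y -> dE G2 x y) ->
  samescc G1 W1 u v -> samescc G2 W2 u v.
Proof. by move=> sW sE /andP[a b]; rewrite /samescc !(reach_sub sW sE). Qed.

Lemma scc_split G W b x y : samescc G W x y ->
  samescc G (W :\ b) x y \/ samescc G W x b.
Proof.
case/andP=> r1 r2; have sW : W :\ b \subset W by apply: subsetDl.
case: (reach_split b r1) => [a|[a1 a2]]; last by right; rewrite /samescc a1 (reach_trans a2 r2).
case: (reach_split b r2) => [c|[c1 c2]]; first by left; apply/andP.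
by right; rewrite /samescc c2 (reach_trans (reach_sub sW (fun _ _ h => h) a) c1).
Qed.

End Reachability.

Section InitialComponent.
Variable T : finType.
Implicit Types (G : digraph T) (R : {set T}).

Definition rooted G R := exists2 u, u \in R & forall y, y \in R -> reach G R u y.

Lemma rooted_unique_initial G R : rooted G R -> unique_initial G R.
Proof.
move=> [u0 u0R hr]; exists [set v | samescc G R u0 v]; split.
  split; first by exists u0.
  move=> x y /setDP[xR]; rewrite !inE => nx /andP[r1 r2]; apply/negP => e.
  have [_ yR] := reach_in r1.
  by move/negP: nx; apply; rewrite /samescc hr //= (reach_trans (reach_edge xR yR e) r2).
move=> _ [[u uR ->] init].
have u0C : samescc G R u u0.
  apply/negPn/negP => nu0; have /andP[_ c] := hr _ uR.
  have [a [b [/and3P[aR bR e] na nb]]] :=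
    connect_cross (A := samescc G R u) c nu0 (scc_refl _ uR).
  have aC : a \in R :\: [set v | samescc G R u v] by rewrite !inE aR andbT.
  have bC : b \in [set v | samescc G R u v] by rewrite inE.
  by move: (init a b aC bC); rewrite e.
apply/setP => v; rewrite !inE; apply/idP/idP => [h|]; last exact: scc_trans u0C.
by apply: scc_trans h; rewrite scc_sym.
Qed.

(* The root is the representative of the initial component; any vertex is reached
   from a vertex with a minimal set of ancestors, whose component is initial. *)
Lemma unique_initial_rooted G R : unique_initial G R -> rooted G R.
Proof.
move=> [C [[[c cR defC] initC] uniq]]; exists c => // y yR.
pose anc x := [set z in R | reach G R z x].
pose P x := (x \in R) && reach G R x y.
have Py : P y by rewrite /P yR reach_refl.
case: (arg_minnP (fun x => #|anc x|) Py) => x /andP[xR rxy] xmin.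
suff e : [set v | samescc G R x v] = C.
  have : x \in C by rewrite -e inE scc_refl.
  by rewrite defC inE => /andP[r _]; apply: reach_trans r rxy.
apply: uniq; split; first by exists x.
move=> z w /setDP[zR]; rewrite !inE => nz /andP[r1 r2]; apply/negP => e.
have [_ wR] := reach_in r1.
have rzx : reach G R z x := reach_trans (reach_edge zR wR e) r2.
have Pz : P z by rewrite /P zR (reach_trans rzx rxy).
have := xmin _ Pz; apply/negP; rewrite -ltnNge; apply: proper_card; apply/properP; split.
  by apply/subsetP => t; rewrite !inE => /andP[-> rt]; apply: reach_trans rt rzx.
exists x; first by rewrite inE xR reach_refl.
by rewrite inE; apply/negP => /andP[_ rxz]; move/negP: nz; apply; apply/andP.
Qed.

End InitialComponent.

Section Closure.
Variable T : finType.
Implicit Types (G : digraph T) (W R S : {set T}) (X : seq T).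

Definition gv_rel gv G W u v :=
  match gv with Vi | Vv => reach G W u v | Visc | Vvsc => samescc G W u v end.

Lemma gv_rel_in gv G W u v : gv_rel gv G W u v -> u \in W /\ v \in W.
Proof. by case: gv => /=; first [apply: reach_in|apply: scc_in]. Qed.

Lemma gv_rel_refl gv G W u : u \in W -> gv_rel gv G W u u.
Proof. by case: gv => /=; first [apply: reach_refl|apply: scc_refl]. Qed.

Lemma gv_rel_trans gv G W u v w : gv_rel gv G W u v -> gv_rel gv G W v w -> gv_rel gv G W u w.
Proof. by case: gv => /=; first [apply: reach_trans|apply: scc_trans]. Qed.

Lemma gv_rel_sub gv G1 G2 W1 W2 u v :
  W1 \subset W2 -> (forall x y, dE G1 x y -> dE G2 x y) ->
  gv_rel gv G1 W1 u v -> gv_rel gv G2 W2 u v.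
Proof. by case: gv => /=; first [apply: reach_sub|apply: scc_sub]. Qed.

Lemma gv_rel_split gv G W b x y : gv_rel gv G W x y ->
  gv_rel gv G (W :\ b) x y \/ gv_rel gv G W x b.
Proof.
have reach_split' x' y' : reach G W x' y' -> reach G (W :\ b) x' y' \/ reach G W x' b.
  by case/(reach_split b) => [|[]]; [left|right].
by case: gv => /=; first [apply: reach_split'|apply: scc_split].
Qed.

Lemma gv_rel_closed gv G X R u w : is_gvpos gv G X R -> u \in R ->
  gv_rel gv G (dV G :\: letX X) u w -> w \in R.
Proof.
case=> _ sR; case: gv => /=.
- by move=> cl uR /(reach_closed cl uR) /reach_in[].
- by case=> _ cl; apply: cl.
- case=> [-> | [cl _]]; first by rewrite inE.
  by move=> uR /(reach_closed cl uR) /reach_in[].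
- case=> [-> | [c _ ->]]; first by rewrite inE.
  by rewrite !inE; apply: scc_trans.
Qed.

Definition gv_closure gv G W S := [set y | [exists w in S, gv_rel gv G W w y]].

Lemma gv_closureP gv G W S y :
  reflect (exists2 w, w \in S & gv_rel gv G W w y) (y \in gv_closure gv G W S).
Proof.
rewrite inE; apply: (iffP existsP) => [[w /andP[]]|[w a b]]; first by exists w.
by exists w; rewrite a.
Qed.

Lemma gv_closure_sub gv G W S : gv_closure gv G W S \subset W.
Proof. by apply/subsetP => y /gv_closureP[w _ /gv_rel_in[]]. Qed.

Lemma sub_gv_closure gv G W S : S \subset W -> S \subset gv_closure gv G W S.
Proof.
move=> sSW; apply/subsetP => y yS; apply/gv_closureP; exists y => //.
exact: gv_rel_refl (subsetP sSW _ yS).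
Qed.

Lemma gv_closure0 gv G W : gv_closure gv G W set0 = set0.
Proof. by apply/setP => y; rewrite in_set0; apply/negbTE/gv_closureP => -[w]; rewrite inE. Qed.

Lemma gv_closure_rel gv G W W0 S R : W \subset W0 ->
  (forall w, w \in S -> exists2 v, v \in R & gv_rel gv G W0 v w) ->
  forall y, y \in gv_closure gv G W S -> exists2 v, v \in R & gv_rel gv G W0 v y.
Proof.
move=> sW h y /gv_closureP[w wS r]; have [v vR r'] := h w wS; exists v => //.
exact: gv_rel_trans r' (gv_rel_sub sW (fun _ _ x => x) r).
Qed.

Lemma reach_closure_succ_closed gv G W S : gv = Vi \/ gv = Vv ->
  succ_closed G W (gv_closure gv G W S).
Proof.
move=> hgv; split=> [|x y /gv_closureP[w wS r] yW e]; first exact: gv_closure_sub.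
by apply/gv_closureP; exists w => //; case: hgv r => -> /= r; apply: reach_step r yW e.
Qed.

(* The sets whose closure is a [gv]-position, see [gv_closure_gvpos]. *)
Definition gv_rooted gv G W S :=
  match gv with
  | Vv | Vvsc => S = set0 \/ exists2 u, u \in S & forall w, w \in S -> gv_rel gv G W u w
  | _ => True
  end.

Lemma gv_rooted1 gv G W b : b \in W -> gv_rooted gv G W [set b].
Proof.
move=> bW; case: gv => //=; right; exists b; rewrite ?inE // => w; rewrite inE => /eqP->.
all: first [exact: reach_refl|exact: scc_refl].
Qed.

Lemma gv_closure_gvpos gv G X S :
  all (mem (dV G)) X -> S \subset dV G :\: letX X -> gv_rooted gv G (dV G :\: letX X) S ->
  is_gvpos gv G X (gv_closure gv G (dV G :\: letX X) S).
Proof.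
set W := dV G :\: letX X => aX sSW rS; split => //; first exact: gv_closure_sub.
case: gv rS => /= rS.
- by apply: reach_closure_succ_closed; left.
- split=> [|u v /gv_closureP[w wS r] r2]; first exact: gv_closure_sub.
  by apply/gv_closureP; exists w => //; apply: scc_trans r r2.
- case: rS => [->|[u0 u0S hu]]; first by left; rewrite gv_closure0.
  have cl : succ_closed G W (gv_closure Vv G W S) by apply: reach_closure_succ_closed; right.
  have u0S' : u0 \in gv_closure Vv G W S.
    by apply/gv_closureP; exists u0 => //; apply: reach_refl (subsetP sSW _ u0S).
  right; split => //; apply: rooted_unique_initial; exists u0 => // y /gv_closureP[w wS r].
  exact: reach_closed cl u0S' (reach_trans (hu w wS) r).
- case: rS => [->|[u0 u0S hu]]; first by left; rewrite gv_closure0.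
  right; exists u0; first exact: subsetP sSW _ u0S.
  apply/setP => y; rewrite inE; apply/gv_closureP/idP => [[w wS r]|r]; last by exists u0.
  exact: scc_trans (hu w wS) r.
Qed.

Lemma gvpos_rooted gv G G' X' W R : subgraph G' G ->
  dV G' :\: letX X' \subset W -> is_gvpos gv G' X' R -> gv_rooted gv G W R.
Proof.
move=> [_ sE] sW [_ sR]; case: gv => //=.
- case=> [->|[_ /unique_initial_rooted[u0 u0R hu]]]; first by left.
  right; exists u0 => // w /hu; apply: reach_sub => //; exact: subset_trans sR sW.
- case=> [->|[u uW eR]]; first by left.
  right; exists u; first by rewrite eR inE scc_refl.
  by move=> w; rewrite eR inE; apply: scc_sub.
Qed.

End Closure.

Section Stacks.
Variable T : finType.
Implicit Types (X Y s t : seq T) (V A B : {set T}).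

(* [undup] keeps last occurrences; keeping first ones makes restriction commute
   with pushing onto the stack. *)
Definition undup_first s := rev (undup (rev s)).

Definition restrict V X := undup_first [seq x <- X | x \in V].

Lemma mem_undup_first s x : (x \in undup_first s) = (x \in s).
Proof. by rewrite mem_rev mem_undup mem_rev. Qed.

Lemma undup_first_uniq s : uniq (undup_first s).
Proof. by rewrite rev_uniq undup_uniq. Qed.

Lemma size_undup_first s : size (undup_first s) <= size s.
Proof. by rewrite size_rev (leq_trans (size_undup _)) // size_rev. Qed.

Lemma undup_first_cat s t :
  undup_first (s ++ t) = undup_first s ++ undup_first [seq x <- t | x \notin s].
Proof.
rewrite /undup_first rev_cat undup_cat rev_cat; congr (_ ++ _).
rewrite filter_undup filter_rev; congr (rev (undup (rev _))); apply: eq_filter => x.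
by rewrite mem_rev.
Qed.

Lemma mem_restrict V X x : (x \in restrict V X) = (x \in X) && (x \in V).
Proof. by rewrite mem_undup_first mem_filter andbC. Qed.

Lemma size_restrict V X : size (restrict V X) <= size X.
Proof. by rewrite (leq_trans (size_undup_first _)) // size_filter count_size. Qed.

Lemma all_restrict V X : all (mem V) (restrict V X).
Proof. by apply/allP => z; rewrite mem_restrict => /andP[]. Qed.

Lemma letX_nil : letX [::] = set0 :> {set T}.
Proof. by apply/setP => z; rewrite !inE. Qed.

Lemma letX_rcons X v : letX (rcons X v) = v |: letX X.
Proof. by apply/setP => z; rewrite !inE mem_rcons inE. Qed.

Lemma letX_prefix X Y : prefix Y X -> letX Y \subset letX X.
Proof. by case/prefixP=> Z ->; apply/subsetP => z; rewrite !inE mem_cat => ->. Qed.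

Lemma letX_restrict V X : letX (restrict V X) = letX X :&: V.
Proof. by apply/setP => x; rewrite !inE mem_restrict. Qed.

Lemma card_letX_uniq X : uniq X -> #|letX X| = size X.
Proof. by move=> u; rewrite cardsE; apply/card_uniqP. Qed.

Lemma all_prefix V X Y : prefix Y X -> all (mem V) X -> all (mem V) Y.
Proof. by case/prefixP=> Z ->; rewrite all_cat => /andP[]. Qed.

Lemma prefix_antisym X Y : prefix X Y -> prefix Y X -> X = Y.
Proof.
move=> p1 p2; have e : size X = size Y by apply/eqP; rewrite eqn_leq !size_prefix.
by move: p1; rewrite prefixE e take_size => /eqP.
Qed.

Lemma symdiff_sub A B : B \subset A -> (A :\: B) :|: (B :\: A) = A :\: B.
Proof. by rewrite -setD_eq0 => /eqP->; rewrite setU0. Qed.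

Lemma symdiff_subC A B : B \subset A -> (B :\: A) :|: (A :\: B) = A :\: B.
Proof. by move=> h; rewrite setUC symdiff_sub. Qed.

Lemma symdiff_rcons X v : v \notin X ->
  #|(letX X :\: letX (rcons X v)) :|: (letX (rcons X v) :\: letX X)| = 1.
Proof.
move=> vX; rewrite symdiff_subC; last by rewrite letX_rcons subsetU1.
rewrite -(cards1 v); apply: eq_card => z; rewrite letX_rcons !inE.
by case: (z =P v) => [->|] /=; [rewrite (negbTE vX)|case: (z \in X)].
Qed.

Lemma symdiff_rconsC X v : v \notin X ->
  #|(letX (rcons X v) :\: letX X) :|: (letX X :\: letX (rcons X v))| = 1.
Proof. by move=> vX; rewrite setUC symdiff_rcons. Qed.

Lemma symdiff_nil_neq X Y :
  #|(letX X :\: letX Y) :|: (letX Y :\: letX X)| = 1 -> X = [::] -> Y != [::].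
Proof.
by move=> c eX; move: c; rewrite eX; apply: contra_eqN => /eqP->; rewrite letX_nil setD0 setU0 cards0.
Qed.

Lemma letX_rcons_setI X v : letX X :&: letX (rcons X v) = letX X.
Proof. by apply/setIidPl; rewrite letX_rcons subsetU1. Qed.

Lemma prefix_drop_letter X : X != [::] ->
  exists2 Y, prefix Y X & #|letX X :\: letX Y| = 1.
Proof.
elim/last_ind: X => // Y x IH _; have pY := prefix_rcons Y x.
case xY: (x \in Y).
  have [|Z pZ cZ] := IH; first by case: Y xY {IH pY}.
  exists Z; first exact: prefix_trans pZ pY.
  rewrite -cZ; apply: eq_card => z; rewrite letX_rcons !inE.
  by case: eqP => // ->; rewrite xY.
exists Y => //; rewrite -(cards1 x); apply: eq_card => z; rewrite letX_rcons !inE.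
by case: (z =P x) => [->|_]; [rewrite xY|case: (z \in Y)].
Qed.

Lemma uniq_singleton (u : seq T) v : uniq u -> v \in u ->
  (forall w, w \in u -> w = v) -> u = [:: v].
Proof.
case: u => [|a [|b u]] //=; first by rewrite inE => _ /eqP ->.
move=> /andP[nab _] _ h; move: nab; rewrite (h a) ?inE ?eqxx // (h b) ?inE ?eqxx ?orbT //.
Qed.

Lemma restrict_cat V X t : #|letX (X ++ t) :\: letX X| <= 1 ->
  restrict V (X ++ t) = restrict V X \/
  exists v, [/\ restrict V (X ++ t) = rcons (restrict V X) v, v \in V
              & v \in letX (X ++ t) :\: letX X].
Proof.
move=> hc; rewrite /restrict filter_cat undup_first_cat.
set u := undup_first [seq x <- [seq x <- t | _] | _].
have memu x : (x \in u) = [&& x \in t, x \in V & x \notin X].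
  rewrite /u mem_undup_first !mem_filter; case: (x \in V) => //=; last by rewrite andbF.
  by rewrite andbC.
case eu: u => [|v u']; first by left; rewrite cats0.
right; have vu : v \in u by rewrite eu inE eqxx.
have vD : v \in letX (X ++ t) :\: letX X.
  by move: vu; rewrite memu !inE mem_cat => /and3P[-> _ ->]; rewrite orbT.
exists v; split => //; last by move: vu; rewrite memu => /and3P[].
rewrite -cats1 -eu; congr (_ ++ _); apply: uniq_singleton => //; first exact: undup_first_uniq.
move=> w wu; apply/eqP; apply: contraTT hc => nwv; rewrite -ltnNge.
apply: (@leq_trans #|[set v; w]|); first by rewrite cards2 eq_sym nwv.
apply/subset_leq_card/subsetP => x; rewrite !inE => /orP[]/eqP->//.
  by move: vD; rewrite !inE.
by move: wu; rewrite memu mem_cat => /and3P[-> _ ->]; rewrite orbT.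
Qed.

End Stacks.

Section Moves.
Variable T : finType.
Implicit Types (G : digraph T) (R : {set T}) (X : seq T).

Definition gv_step gv G X R X2 R2 := gv_succ gv G (X, R) (X2, R2).

Lemma gvpos_set0 gv G X : all (mem (dV G)) X -> is_gvpos gv G X set0.
Proof.
move=> aX; split => //; first exact: sub0set.
by case: gv; try (by left); split=> [|x y]; rewrite ?sub0set ?inE.
Qed.

Lemma gvpos_all gv G X R : is_gvpos gv G X R -> all (mem (dV G)) X.
Proof. by case. Qed.

Lemma gvpos_not_special gv G X R : is_gvpos gv G X R -> ~ is_special gv G X R.
Proof. by move=> p [_ [eX [eR np]]]; apply: np; rewrite -eX -eR. Qed.

Lemma start_special gv G : ~ is_gvpos gv G [::] (dV G) -> is_special gv G [::] (dV G).
Proof.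
move=> p0; suff : gv = Vv \/ gv = Vvsc by do 3!split => //.
have e0 : dV G :\: letX [::] = dV G by rewrite letX_nil setD0.
case: gv p0 => p0; [exfalso|exfalso|by left|by right].
- by apply: p0; split => //; rewrite e0 //; split => // x y _ ->.
- by apply: p0; split => //; rewrite e0 //; split => // u v _ /scc_in[_ ->].
Qed.

Lemma start_pos gv G : is_pos gv G [::] (dV G).
Proof.
case: (classic (is_gvpos gv G [::] (dV G))) => p; [by left|by right; apply: start_special].
Qed.

Lemma reg_succ_rel gv G X R X2 R2 : reg_succ gv G (X, R) (X2, R2) <->
  [/\ is_gvpos gv G X2 R2, prefix X X2 || prefix X2 X,
      #|(letX X :\: letX X2) :|: (letX X2 :\: letX X)| = 1 &
      forall v', v' \in R2 -> exists2 v, v \in R & gv_rel gv G (dV G :\: (letX X :&: letX X2)) v v'].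
Proof. by case: gv. Qed.

Lemma gv_step_reg gv G X R X2 R2 : is_gvpos gv G X R ->
  gv_step gv G X R X2 R2 -> reg_succ gv G (X, R) (X2, R2).
Proof. by move=> p [_ h]; apply/h/gvpos_not_special. Qed.

Lemma reg_gv_succ gv G X R p : is_gvpos gv G X R -> reg_succ gv G (X, R) p -> gv_succ gv G (X, R) p.
Proof. by move=> pX r; split => // /(gvpos_not_special pX). Qed.

Lemma gv_succ_gvpos gv G p X2 R2 : gv_succ gv G p (X2, R2) -> is_gvpos gv G X2 R2.
Proof.
case: p => X R [h1 h2]; case: (classic (is_special gv G X R)) => sp; first by case: (h1 sp).
by case: (h2 sp).
Qed.

Lemma gv_step_set0 gv G X R X2 R2 : gv_step gv G X R X2 R2 -> gv_step gv G X R X2 set0.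
Proof.
case=> h1 h2; split=> [/h1[e /gvpos_all p]|/h2[/gvpos_all p a b _]].
  by split => //; apply: gvpos_set0.
split => //; first exact: gvpos_set0.
by move=> v; rewrite inE.
Qed.

Lemma reg_succ_set0 gv G X X2 R2 : reg_succ gv G (X, set0) (X2, R2) -> R2 = set0.
Proof.
move=> [_ _ _ h]; apply/setP => v; rewrite inE; apply/negP => vR.
by have [w] := h v vR; rewrite inE.
Qed.

(* Witness: lift the last searcher placed on a new vertex, or place a first one. *)
Lemma gv_step_exists gv G X R : dV G != set0 -> is_pos gv G X R ->
  exists2 X2, gv_step gv G X R X2 set0 & size X2 <= maxn (size X) 1.
Proof.
move=> nV pos; have aX : all (mem (dV G)) X by case: pos => [/gvpos_all|[_ [-> _]]].
case: (classic (is_special gv G X R)) => sp.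
  by exists [::]; split => // _; split => //; apply: gvpos_set0.
have reg X2 : reg_succ gv G (X, R) (X2, set0) -> gv_step gv G X R X2 set0.
  by move=> h; split => // /sp.
case eX: X => [|x X'].
  have [e|[v vV]] := set_0Vmem (dV G); first by rewrite e eqxx in nV.
  exists [:: v] => //; rewrite -eX; apply: reg; rewrite eX; split => //=.
  - by apply: gvpos_set0; rewrite /= vV.
  - by rewrite letX_nil set0D setD0 set0U -(cards1 v); apply: eq_card => z; rewrite !inE.
  - by move=> v'; rewrite inE.
have [Y pY cY] := prefix_drop_letter (X := x :: X') isT.
exists Y; last by rewrite (leq_trans (size_prefix pY)) // leq_maxl.
rewrite -eX in pY cY *; apply: reg; split.
- exact/gvpos_set0/(all_prefix pY).
- by rewrite pY orbT.
- by rewrite symdiff_sub ?(letX_prefix pY).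
- by move=> v'; rewrite inE.
Qed.

End Moves.

Lemma ex_minn_prop (P : nat -> Prop) :
  (exists n, P n) -> exists n, P n /\ forall j, P j -> n <= j.
Proof.
case=> n; elim/ltn_ind: n => n IH Pn.
case: (classic (exists2 j, j < n & P j)) => [[j lt Pj]|nj]; first exact: IH lt Pj.
by exists n; split => // j Pj; rewrite leqNgt; apply/negP => lt; apply: nj; exists j.
Qed.

Lemma inbS o i : inb o i.+1 -> inb o i.
Proof. by case: o => //= n; apply: ltnW. Qed.

Section BoundedGame.
Variable T : finType.
Variables (gv : game_variant) (G : digraph T) (k : nat) (m st : bool).
Implicit Types (R : {set T}) (X : seq T).

Definition allowed X R X2 :=
  [/\ exists R2, gv_step gv G X R X2 R2, size X2 <= k,
      (m -> forall R2, gv_step gv G X R X2 R2 -> R2 \subset R) &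
      (st -> R != set0 -> prefix X X2)].

(* [win n X R]: from [(X, R)] the searchers force capture within [n - 1] allowed moves. *)
Fixpoint win n X R : Prop :=
  if n is n'.+1 then
    size X <= k /\ (R = set0 \/ exists2 X2, allowed X R X2 &
                      forall R2, gv_step gv G X R X2 R2 -> win n' X2 R2)
  else False.

Lemma win_le n n' X R : n <= n' -> win n X R -> win n' X R.
Proof.
elim: n n' X R => [//|n IH] [//|n'] X R /= le [sk w]; split => //.
case: w => [|[X2 a h]]; [by left|right; exists X2 => // R2 /h; apply: IH le].
Qed.

Lemma win_set0 n X : size X <= k -> win n.+1 X set0.
Proof. by split => //; left. Qed.

Lemma win_nonempty X R : (forall n, ~ win n X R) -> size X <= k -> R != set0.
Proof. by move=> nw sk; apply/eqP => e; apply: (nw 1); rewrite e; apply: win_set0. Qed.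

(* Finitely many responses: if each can be won in bounded time, so can all together. *)
Lemma escape_move X R : (forall n, ~ win n X R) -> size X <= k ->
  forall X2, allowed X R X2 -> exists R2, gv_step gv G X R X2 R2 /\ forall n, ~ win n X2 R2.
Proof.
move=> nw sk X2 a; apply: NNPP => hn.
have all_w R2 : gv_step gv G X R X2 R2 -> exists n, win n X2 R2.
  by move=> r; apply: NNPP => h; apply: hn; exists R2; split => // n w; apply: h; exists n.
suff [N hN] : exists N, forall R2 : {set T}, R2 \in enum {set T} ->
    gv_step gv G X R X2 R2 -> win N X2 R2.
  by apply: (nw N.+1); split => //; right; exists X2 => // R2; apply/hN; rewrite mem_enum.
elim: (enum {set T}) => [|R0 l [N hN]]; first by exists 0.
case: (classic (gv_step gv G X R X2 R0)) => r0; last first.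
  by exists N => R2; rewrite inE => /orP[/eqP->|l2] r2 //; apply: hN.
have [n0 w0] := all_w R0 r0; exists (maxn N n0) => R2; rewrite inE => /orP[/eqP->|l2] r2.
  by apply: win_le w0; rewrite leq_maxr.
by apply: win_le (hN R2 l2 r2); rewrite leq_maxl.
Qed.

Definition canon_spec X R X2 :=
  [/\ exists R2, gv_step gv G X R X2 R2,
      (R = set0 -> size X2 <= maxn (size X) 1) &
      (R != set0 -> forall n, win n.+1 X R ->
         allowed X R X2 /\ forall R2, gv_step gv G X R X2 R2 -> win n X2 R2)].

(* Play a move that wins as fast as possible, if there is one. *)
Definition canon_strategy X R := epsilon (inhabits [::]) (canon_spec X R).

Lemma canon_strategyP X R : dV G != set0 -> is_pos gv G X R ->
  canon_spec X R (canon_strategy X R).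
Proof.
move=> nV pos; apply: (epsilon_spec (inhabits [::]) (canon_spec X R)).
have [X0 r0 s0] := gv_step_exists nV pos.
have [eR|nR] := eqVneq R set0.
  by exists X0; split; [exists set0 | move=> _ | rewrite eR eqxx].
case: (classic (exists n, win n.+1 X R)) => [ex|nex]; last first.
  exists X0; split=> [|eR|_ n wn]; [by exists set0|by rewrite eR eqxx in nR|].
  by case: nex; exists n.
have [n0 [[_ [eR|[X2 a h]]] mn]] := ex_minn_prop ex; first by rewrite eR eqxx in nR.
exists X2; split=> [|eR|_ n wn]; [by case: a|by rewrite eR eqxx in nR|split => // R2 /h].
exact/win_le/mn.
Qed.

Definition good_strategy sigma :=
  [/\ is_strategy gv G sigma, strat_has gv G sigma (@winning_search T),
      strat_has gv G sigma (@k_search T k), (m -> strat_has gv G sigma (@monotone_search T)) &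
      (st -> strat_has gv G sigma (@stationary_search T))].

Section CanonSearch.
Hypotheses (nV : dV G != set0) (k_gt0 : 0 < k).
Variables (s : nat -> pos T) (o : option nat).
Hypothesis cs : consistent_search gv G canon_strategy s o.

Lemma canon_search_step i n : inb o i.+1 -> win n.+1 (s i).1 (s i).2 ->
  ((s i).2 = set0 -> (s i.+1).2 = set0 /\ size (s i.+1).1 <= k) /\
  ((s i).2 != set0 -> allowed (s i).1 (s i).2 (s i.+1).1 /\ win n (s i.+1).1 (s i.+1).2).
Proof.
move=> ii w; have [sk _] := w; have [_ _ ps /(_ i ii)[sc e1]] := cs.
have [_ h2 h3] := canon_strategyP nV (ps i (inbS ii)).
have rs : gv_step gv G (s i).1 (s i).2 (s i.+1).1 (s i.+1).2 by rewrite /gv_step -!surjective_pairing.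
split=> [eR|nR]; last by have [a hw] := h3 nR n w; rewrite e1; split => //; apply: hw; rewrite -e1.
have nsp : ~ is_special gv G (s i).1 (s i).2.
  by case=> _ [_ [eV _]]; move: nV; rewrite -eV eR eqxx.
case: rs => _ /(_ nsp); rewrite eR => /reg_succ_set0 ->; split => //.
by rewrite e1 (leq_trans (h2 eR)) // geq_max sk.
Qed.

Lemma canon_search_win N : win N.+1 [::] (dV G) -> forall i, inb o i ->
  exists n, win n.+1 (s i).1 (s i).2 /\ ((s i).2 != set0 -> n + i <= N).
Proof.
move=> w0; have [_ e0 _ _] := cs; elim=> [_|i IH ii]; first by rewrite e0; exists N; rewrite addn0.
have [n [w b]] := IH (inbS ii); have [h0 h1] := canon_search_step ii w.
have [eR|nR] := eqVneq (s i).2 set0.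
  by have [e1 sk] := h0 eR; exists 0; rewrite e1 eqxx; split => //; apply: win_set0.
have [_] := h1 nR; clear h0 h1; case: n w b => [//|n] w b w1; exists n; split => // _.
by rewrite addnS -addSn; apply: b.
Qed.

End CanonSearch.

Lemma canon_strategy_good N : dV G != set0 -> 0 < k -> win N.+1 [::] (dV G) ->
  good_strategy canon_strategy.
Proof.
move=> nV k0 w0; split.
- by move=> X R pos; have [[R2 h] _ _] := canon_strategyP nV pos; exists R2.
- move=> s o cs [eo|[i ii e]]; last by exists i.
  subst o; case: (classic (exists i, (s i).2 = set0)) => [[i e]|ne]; first by exists i.
  have [n [_ b]] := canon_search_win nV k0 cs w0 (isT : inb None N.+1).
  have /b : (s N.+1).2 != set0 by apply/eqP => e; apply: ne; exists N.+1.
  by rewrite addnS ltnNge leq_addl.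
- by move=> s o cs _ i ii; have [n [[sk _] _]] := canon_search_win nV k0 cs w0 ii.
- move=> mm s o cs _ i ii; have [n [w _]] := canon_search_win nV k0 cs w0 (inbS ii).
  have [h0 h1] := canon_search_step nV k0 cs ii w.
  have [eR|nR] := eqVneq (s i).2 set0; first by rewrite (proj1 (h0 eR)) eR sub0set.
  have [[_ _ hm _] _] := h1 nR; apply: (hm mm).
  have [_ _ _ /(_ i ii)[sc _]] := cs; by rewrite /gv_step -!surjective_pairing.
- move=> sst s o cs _ i ii nR; have [n [w _]] := canon_search_win nV k0 cs w0 (inbS ii).
  by have [_ /(_ nR)[[_ _ _ /(_ sst nR)]]] := canon_search_step nV k0 cs ii w.
Qed.

End BoundedGame.

Section NaiveSearch.
Variable T : finType.
Variables (gv : game_variant) (G : digraph T) (m st : bool).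
Implicit Types (R : {set T}) (X : seq T).

Local Notation win := (win gv G #|dV G| m st).
Local Notation allowed := (allowed gv G #|dV G| m st).

Lemma size_uniq_gvpos X R : uniq X -> is_gvpos gv G X R -> size X <= #|dV G|.
Proof.
move=> uX [aX _ _]; rewrite -card_letX_uniq //; apply/subset_leq_card/subsetP => z.
by rewrite inE; apply: (allP aX).
Qed.

Lemma place_allowed X R v : uniq X -> is_gvpos gv G X R -> v \in R -> allowed X R (rcons X v).
Proof.
move=> uX p vR; have [aX sR _] := p; have := subsetP sR _ vR; rewrite inE => /andP[vX vV].
have uX2 : uniq (rcons X v) by rewrite rcons_uniq uX andbT; move: vX; rewrite inE.
have p2 : is_gvpos gv G (rcons X v) set0 by apply: gvpos_set0; rewrite all_rcons aX andbT.
have vX' : v \notin X by move: vX; rewrite inE.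
split.
- exists set0; split=> [/(gvpos_not_special p)//|_]; split; rewrite ?prefix_rcons ?symdiff_rcons //.
  by move=> v'; rewrite inE.
- exact: size_uniq_gvpos p2.
- move=> _ R2 /(gv_step_reg p)/reg_succ_rel[_ _ _ h]; apply/subsetP => w /h[u uR].
  by rewrite letX_rcons_setI; apply: gv_rel_closed p uR.
- by rewrite prefix_rcons.
Qed.

Lemma win_place d X R : #|dV G :\: letX X| <= d -> uniq X -> is_gvpos gv G X R -> win d.+1 X R.
Proof.
elim: d X R => [|d IH] X R cd uX p; have [aX sR _] := p; split; rewrite ?(size_uniq_gvpos uX p) //.
  left; apply/setP => z; rewrite inE; apply/negP => zR.
  by move: cd; rewrite leqn0 cards_eq0 => /eqP e; have := subsetP sR _ zR; rewrite e inE.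
have [->|[v vR]] := set_0Vmem R; [by left|right; exists (rcons X v)].
  exact: place_allowed.
have vX : v \notin letX X by have := subsetP sR _ vR; rewrite inE => /andP[].
move=> R2 /(gv_step_reg p)[p2 _ _ _]; apply: IH p2; last first.
  by rewrite rcons_uniq uX andbT; rewrite inE in vX.
rewrite -ltnS (leq_trans _ cd) // proper_card //; apply/properP; split.
  by rewrite letX_rcons; apply: setDS; apply: subsetU1.
by exists v; [apply: subsetP sR _ vR|rewrite letX_rcons !inE eqxx].
Qed.

Lemma win_start : exists n, win n [::] (dV G).
Proof.
have cd0 : #|dV G :\: letX [::]| <= #|dV G| by rewrite letX_nil setD0.
case: (classic (is_gvpos gv G [::] (dV G))) => p0; first by exists #|dV G|.+1; apply: win_place.
have sp := start_special p0; exists #|dV G|.+2; split => //; right; exists [::].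
  split => //.
  - by exists set0; split => // _; split => //; apply: gvpos_set0.
  - move=> _ R2 [/(_ sp) [_ [_ sR2 _]] _]; apply: subset_trans sR2 _; exact: subsetDl.
by move=> R2 [/(_ sp) [_ p2] _]; apply: win_place.
Qed.

End NaiveSearch.

Lemma monotone_vacated_unreachable T gv (G : digraph T) X R X2 b v :
  (forall R2, reg_succ gv G (X, R) (X2, R2) -> R2 \subset R) ->
  is_gvpos gv G X R -> all (mem (dV G)) X2 -> prefix X X2 || prefix X2 X ->
  #|(letX X :\: letX X2) :|: (letX X2 :\: letX X)| = 1 ->
  b \in letX X -> b \in dV G :\: letX X2 -> v \in R ->
  ~ gv_rel gv G (dV G :\: (letX X :&: letX X2)) v b.
Proof.
move=> mon [_ sR _] aX2 pX cX bX bW2 vR r.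
set W2 := dV G :\: letX X2.
have bS : [set b] \subset W2 by rewrite sub1set.
have r2 : reg_succ gv G (X, R) (X2, gv_closure gv G W2 [set b]).
  apply/reg_succ_rel; split=> //.
    by apply: gv_closure_gvpos => //; apply: gv_rooted1; rewrite -sub1set.
  apply: gv_closure_rel; first by apply: setDS; apply: subsetIr.
  by move=> w; rewrite inE => /eqP->; exists v.
have bR : b \in R by apply: subsetP (mon _ r2) _ (subsetP (sub_gv_closure gv G bS) _ (set11 b)).
by have := subsetP sR _ bR; rewrite inE bX.
Qed.

Section Shadow.
Variable T : finType.
Variables (gv : game_variant) (G G' : digraph T) (k : nat) (m st : bool).
Hypothesis sub : subgraph G' G.
Implicit Types (R : {set T}) (X : seq T).

Local Notation V := (dV G).
Local Notation V' := (dV G').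
Local Notation pr := (restrict V').
Local Notation winG' := (win gv G' k m st).
Local Notation closure X := (gv_closure gv G (V :\: letX X)).

Let sub_V : V' \subset V. Proof. by case: sub. Qed.
Let sub_E x y : dE G' x y -> dE G x y. Proof. by case: sub => _; apply. Qed.

Lemma free_restrict X : V' :\: letX (pr X) \subset V :\: letX X.
Proof.
apply/subsetP => z; rewrite letX_restrict !inE => /andP[h zV'].
by rewrite (subsetP sub_V _ zV') andbT; apply: contra h => ->.
Qed.

Lemma free2_restrict X X2 :
  V' :\: (letX (pr X) :&: letX (pr X2)) \subset V :\: (letX X :&: letX X2).
Proof.
apply/subsetP => z; rewrite !letX_restrict !inE => /andP[h zV'].
by rewrite (subsetP sub_V _ zV') andbT; apply: contra h => /andP[-> ->]; rewrite zV'.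
Qed.

Variant restrict_move X X2 : Prop :=
  | RestrictStay of pr X2 = pr X
  | RestrictPush v of pr X2 = rcons (pr X) v & v \in V' & v \in letX X2 :\: letX X
  | RestrictPop b of prefix X2 X & ~~ prefix X X2 & pr X = rcons (pr X2) b & b \in V' &
        b \in letX X :\: letX X2.

Lemma restrict_moveP X X2 : prefix X X2 || prefix X2 X ->
  #|(letX X :\: letX X2) :|: (letX X2 :\: letX X)| = 1 -> restrict_move X X2.
Proof.
case/orP => p c; have s := letX_prefix p.
  rewrite symdiff_subC // in c; case/prefixP: (p) c => t eX2 c; rewrite eX2 in c *.
  case: (restrict_cat V' (X := X) (t := t)); first by rewrite c.
    by apply: RestrictStay.
  by case=> v [e vV vD]; apply: RestrictPush e vV vD.
rewrite symdiff_sub // in c.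
have np : ~~ prefix X X2.
  by apply/negP => p2; move: c; rewrite (prefix_antisym p2 p) setDv cards0.
case/prefixP: (p) c => t eX c; rewrite eX in c np *.
case: (restrict_cat V' (X := X2) (t := t)); first by rewrite c.
  by move=> e; apply: RestrictStay.
by case=> b [e bV bD]; apply: (RestrictPop (prefix_prefix _ _) np e bV bD).
Qed.

(* [R'] is the region of a G'-robber who can never be caught from [(pr X, R')],
   shadowing the G-robber's region [R] at the G-position [(X, R)]. *)
Definition shadow X R R' :=
  [/\ is_gvpos gv G X R, is_gvpos gv G' (pr X) R', R' \subset R,
      (forall n, ~ winG' n (pr X) R') & size X <= k].

Definition escape_region X R' X2 := epsilon (inhabits set0)
  (fun R2 => gv_step gv G' (pr X) R' (pr X2) R2 /\ forall n, ~ winG' n (pr X2) R2).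

Definition shadow_region X R' X2 := if pr X2 == pr X then R' else escape_region X R' X2.

Lemma shadow_lift X R X2 R'2 : size X2 <= k -> all (mem V) X2 ->
  prefix X X2 || prefix X2 X -> #|(letX X :\: letX X2) :|: (letX X2 :\: letX X)| = 1 ->
  is_gvpos gv G' (pr X2) R'2 -> (forall n, ~ winG' n (pr X2) R'2) ->
  (forall w, w \in R'2 -> exists2 v, v \in R & gv_rel gv G (V :\: (letX X :&: letX X2)) v w) ->
  shadow X2 (closure X2 R'2) R'2 /\ reg_succ gv G (X, R) (X2, closure X2 R'2).
Proof.
move=> hk aX2 pX cX p2 nw2 rel2.
have sR'2 : R'2 \subset V :\: letX X2 by apply: subset_trans (free_restrict X2); case: p2.
have pl : is_gvpos gv G X2 (closure X2 R'2).
  by apply: gv_closure_gvpos => //; apply: gvpos_rooted sub (free_restrict X2) p2.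
split; first by split => //; apply: sub_gv_closure.
apply/reg_succ_rel; split => //; apply: gv_closure_rel rel2.
by apply: setDS; apply: subsetIr.
Qed.

Lemma shadow_escape X R R' X2 : shadow X R R' -> size X2 <= k -> all (mem V) X2 ->
  prefix X X2 || prefix X2 X -> #|(letX X :\: letX X2) :|: (letX X2 :\: letX X)| = 1 ->
  allowed gv G' k m st (pr X) R' (pr X2) -> pr X2 != pr X ->
  shadow X2 (closure X2 (shadow_region X R' X2)) (shadow_region X R' X2) /\
  reg_succ gv G (X, R) (X2, closure X2 (shadow_region X R' X2)).
Proof.
move=> [pX pX' sRR' nw sk] hk aX2 pX2 cX al ne.
have [R'2 [r2 nw2]] := escape_move nw (leq_trans (size_restrict _ _) sk) al.
have [r2' nw2'] : gv_step gv G' (pr X) R' (pr X2) (escape_region X R' X2) /\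
    forall n, ~ winG' n (pr X2) (escape_region X R' X2).
  exact: (epsilon_spec (inhabits set0) (fun R2 => _ /\ _) (ex_intro _ R'2 (conj r2 nw2))).
rewrite /shadow_region (negbTE ne).
have /reg_succ_rel[pa _ _ rel2] := gv_step_reg pX' r2'.
apply: shadow_lift => // w /rel2[v' v'R' r]; exists v'; first exact: subsetP sRR' _ v'R'.
exact: gv_rel_sub (free2_restrict X X2) sub_E r.
Qed.

Lemma restrict_allowed X R' X2 : is_gvpos gv G' (pr X) R' -> size X2 <= k ->
  prefix (pr X) (pr X2) || prefix (pr X2) (pr X) ->
  #|(letX (pr X) :\: letX (pr X2)) :|: (letX (pr X2) :\: letX (pr X))| = 1 ->
  (m -> forall R'', gv_step gv G' (pr X) R' (pr X2) R'' -> R'' \subset R') ->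
  (st -> prefix (pr X) (pr X2)) ->
  allowed gv G' k m st (pr X) R' (pr X2).
Proof.
move=> pX' hk pp cp mon sta; split => //.
- exists set0; split => [/(gvpos_not_special pX')//|_].
  by apply/reg_succ_rel; split => //; [apply/gvpos_set0/all_restrict|move=> v'; rewrite inE].
- exact: leq_trans (size_restrict _ _) hk.
- by move=> /sta.
Qed.

Lemma shadow_step X R R' X2 : shadow X R R' ->
  (exists R3, reg_succ gv G (X, R) (X2, R3)) -> size X2 <= k ->
  (m -> forall R2, reg_succ gv G (X, R) (X2, R2) -> R2 \subset R) -> (st -> prefix X X2) ->
  shadow X2 (closure X2 (shadow_region X R' X2)) (shadow_region X R' X2) /\
  reg_succ gv G (X, R) (X2, closure X2 (shadow_region X R' X2)).
Proof.
move=> sh [R3 /reg_succ_rel[p3 pX cX _]] hk hm hs; have [pX0 pX' sRR' nw sk] := sh.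
have aX2 := gvpos_all p3; have [_ sR _] := pX0.
case: (restrict_moveP pX cX) => [e|v e vV' vD|b pX2X np e bV' bD].
- rewrite /shadow_region e eqxx; apply: shadow_lift; rewrite ?e //.
  move=> w wR'; have wR := subsetP sRR' _ wR'; exists w => //; apply: gv_rel_refl.
  by apply: subsetP (setDS _ (subsetIl _ _)) _ (subsetP sR _ wR).
- have vX : v \notin pr X by rewrite mem_restrict; move: vD; rewrite !inE => /andP[/negbTE-> _].
  apply: shadow_escape => //; last by rewrite e; apply/eqP => /(congr1 size); rewrite size_rcons; lia.
  apply: restrict_allowed => //; rewrite ?e ?prefix_rcons ?symdiff_rcons //.
  move=> mm R'' /(gv_step_reg pX')/reg_succ_rel[_ _ _ hrel]; apply/subsetP => w /hrel[v' v'R'].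
  by rewrite letX_rcons_setI; apply: gv_rel_closed pX' v'R'.
- have bX2 : b \notin pr X2 by rewrite mem_restrict; move: bD; rewrite !inE => /andP[/negbTE-> _].
  have bW2 : b \in V :\: letX X2.
    by rewrite !inE (subsetP sub_V _ bV') andbT; move: bD; rewrite !inE => /andP[].
  have bX : b \in letX X by move: bD; rewrite !inE => /andP[].
  apply: shadow_escape => //; last by rewrite e; apply/eqP => /(congr1 size); rewrite size_rcons; lia.
  apply: restrict_allowed => //; [by rewrite e prefix_rcons orbT|by rewrite e symdiff_rconsC| |].
    move=> mm R'' /(gv_step_reg pX')/reg_succ_rel[_ _ _ hrel]; apply/subsetP => w /hrel[v' v'R'].
    rewrite e setIC letX_rcons_setI => r1; case: (gv_rel_split b r1) => r2.
      by apply: gv_rel_closed pX' v'R' _; rewrite e letX_rcons setUC -setDDl.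
    case: (monotone_vacated_unreachable (hm mm) pX0 aX2 pX cX bX bW2 (subsetP sRR' _ v'R')).
    by apply: gv_rel_sub (free2_restrict X X2) sub_E _; rewrite e setIC letX_rcons_setI.
  by move=> /hs; rewrite (negbTE np).
Qed.

End Shadow.

Section StrategyFacts.
Variable T : finType.
Variables (gv : game_variant) (G : digraph T) (k : nat) (m st : bool).
Variable sigma : seq T -> {set T} -> seq T.
Hypothesis good : good_strategy gv G k m st sigma.

Lemma search_set0_stable s o : dV G != set0 -> consistent_search gv G sigma s o ->
  forall t d, inb o (t + d) -> (s t).2 = set0 -> (s (t + d)).2 = set0.
Proof.
move=> nV [_ _ ps cs] t; elim=> [|d IH]; first by rewrite addn0.
rewrite addnS => td e; have [sc _] := cs _ td; have {}e := IH (inbS td) e.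
have nsp : ~ is_special gv G (s (t + d)).1 (s (t + d)).2.
  by case=> _ [_ [eV _]]; move: nV; rewrite -eV e eqxx.
case: (s (t + d)) sc nsp e => X R [_ h] /= nsp e.
by case: (s (t + d).+1) h => X2 R2 /(_ nsp); rewrite e => /reg_succ_set0.
Qed.

(* A consistent prefix ending at [j], followed by the answer [R2] to the next move
   and by capture right after, is a complete consistent search. *)
Definition extend_search (s : nat -> pos T) j R2 t : pos T :=
  if t <= j then s t else if t == j.+1 then (sigma (s j).1 (s j).2, R2)
  else (sigma (sigma (s j).1 (s j).2) R2, set0).

Lemma extend_search_consistent s j R2 : consistent_search gv G sigma s (Some j.+1) ->
  gv_succ gv G (s j) (sigma (s j).1 (s j).2, R2) ->
  consistent_search gv G sigma (extend_search s j R2) (Some j.+3).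
Proof.
move=> [i0 e0 ps cs] g1; have [strat _ _ _ _] := good.
have p1 := gv_succ_gvpos g1.
have [R3 /gv_step_set0 g2] := strat _ _ (or_introl p1).
split=> // [t tt|t tt]; rewrite /extend_search.
  case: leqP => tj; first exact: ps.
  by case: eqP => _; left; [|apply: gv_succ_gvpos g2].
case: (leqP t.+1 j) => tj; first by rewrite ltnW //; apply: cs.
have [->|->] : t = j \/ t = j.+1 by move: tt; rewrite /inb; lia.
  by rewrite leqnn eqxx.
by rewrite ltnn eqxx (_ : (j.+2 == j.+1) = false) //; lia.
Qed.

Lemma extend_search_has s j R2 P : consistent_search gv G sigma s (Some j.+1) ->
  gv_succ gv G (s j) (sigma (s j).1 (s j).2, R2) ->
  strat_has gv G sigma P -> P (extend_search s j R2) (Some j.+3).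
Proof.
move=> cs g1 hP; apply: hP; first exact: extend_search_consistent.
right; exists j.+2; rewrite /inb // /extend_search.
by case: ifP => h1; [move: h1; lia|case: ifP => h2 //; move: h2; lia].
Qed.

(* The first move that really changes the stack needs a searcher. *)
Lemma good_strategy_k_gt0 : 0 < k.
Proof.
have [strat _ kb _ _] := good.
pose s : nat -> pos T := fun _ => ([::], dV G).
have cs : consistent_search gv G sigma s (Some 1) by split => // t _; apply: start_pos.
have [R3 g3] := strat [::] (dV G) (start_pos gv G).
have [_ _ _ succ] := extend_search_consistent cs g3.
have [[g01 _] [g12 _]] := (succ 0 isT, succ 1 isT).
have [k11 k12] := (extend_search_has cs g3 kb 1 isT, extend_search_has cs g3 kb 2 isT).
rewrite /extend_search /= in g01 g12 k11 k12.
case: (eqVneq (sigma [::] (dV G)) [::]) => e; last by apply: leq_trans k11; rewrite lt0n size_eq0.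
apply: leq_trans k12; rewrite lt0n size_eq0.
have /reg_succ_rel[_ _ cd _] := gv_step_reg (gv_succ_gvpos g01) g12.
exact: symdiff_nil_neq cd e.
Qed.

End StrategyFacts.

Section Simulation.
Variable T : finType.
Variables (gv : game_variant) (G G' : digraph T) (k : nat) (m st : bool).
Variable sigma : seq T -> {set T} -> seq T.
Hypotheses (nV : dV G != set0) (sub : subgraph G' G).
Hypothesis good : good_strategy gv G k m st sigma.

Local Notation V := (dV G).
Local Notation V' := (dV G').
Local Notation pr := (restrict V').
Local Notation winG' := (win gv G' k m st).
Local Notation closure X := (gv_closure gv G (V :\: letX X)).
Local Notation shadow := (shadow gv G G' k m st).
Local Notation shadow_region := (shadow_region gv G' k m st).

(* The G-searchers follow [sigma]; the G-robber follows the shadow G'-robber. *)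
Definition shadow_next (q : pos T * {set T}) : pos T * {set T} :=
  let: ((X, R), R') := q in
  let X2 := sigma X R in ((X2, closure X2 (shadow_region X R' X2)), shadow_region X R' X2).

Lemma shadow_nextP s j R' : consistent_search gv G sigma s (Some j.+1) ->
  shadow (s j).1 (s j).2 R' ->
  shadow (shadow_next (s j, R')).1.1 (shadow_next (s j, R')).1.2 (shadow_next (s j, R')).2 /\
  gv_succ gv G (s j) (shadow_next (s j, R')).1.
Proof.
case E: (s j) => [X R] cs sh; rewrite /shadow_next.
have [strat _ kb mon sta] := good; have [pX _ _ _ _] := sh.
have [R3 /gv_step_set0 g3] := strat X R (or_introl pX); have r3 := gv_step_reg pX g3.
have ext R2 P : reg_succ gv G (X, R) (sigma X R, R2) -> strat_has gv G sigma P ->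
    P (extend_search sigma s j R2) (Some j.+3).
  by move=> r2; apply: (extend_search_has good cs); rewrite E; apply: reg_gv_succ.
have ej R2 : extend_search sigma s j R2 j = (X, R) by rewrite /extend_search leqnn.
have ej1 R2 : extend_search sigma s j R2 j.+1 = (sigma X R, R2).
  by rewrite /extend_search ltnn eqxx E.
have hk : size (sigma X R) <= k by have := ext _ _ r3 kb j.+1; rewrite ej1; apply; rewrite /inb; lia.
have hm : m -> forall R2, reg_succ gv G (X, R) (sigma X R, R2) -> R2 \subset R.
  by move=> mm R2 r2; have := ext _ _ r2 (mon mm) j; rewrite ej ej1; apply; rewrite /inb; lia.
have nR : R != set0.
  have [_ _ sRR' nw sk] := sh; have := win_nonempty nw (leq_trans (size_restrict _ _) sk).
  by apply: contraNneq => eR; rewrite -subset0 -eR.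
have hs : st -> prefix X (sigma X R).
  by move=> sst; have := ext _ _ r3 (sta sst) j; rewrite ej ej1; apply => //; rewrite /inb; lia.
have [sh2 r2] := shadow_step sub sh (ex_intro _ set0 r3) hk hm hs.
by split => //; apply: reg_gv_succ.
Qed.

Lemma shadow_next_stack q : (shadow_next q).1.1 = sigma q.1.1 q.1.2.
Proof. by case: q => [[X R] R']. Qed.

(* Once the G-robber is shadowed, following the shadow forever is a complete play
   consistent with [sigma] in which he is never caught. *)
Lemma shadow_caught s j R' : consistent_search gv G sigma s (Some j.+1) ->
  shadow (s j).1 (s j).2 R' -> False.
Proof.
move=> cs sh; have [_ win_s _ _ _] := good.
pose q i := iter i shadow_next (s j, R').
pose g t := if t <= j then s t else (q (t - j)).1.
have gq i : g (j + i) = (q i).1.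
  rewrite /g; case: ifP => h; last by congr (q _).1; lia.
  have -> : i = 0 by lia.
  by rewrite addn0.
have claim i : shadow (q i).1.1 (q i).1.2 (q i).2 /\ consistent_search gv G sigma g (Some (j + i).+1).
  elim: i => [|i [shi csi]].
    split => //; rewrite addn0; case: cs => i0 e0 ps css; split => //.
    - by move=> t tj; rewrite /g (_ : t <= j) //; apply: ps.
    - by move=> t tj; rewrite /g (_ : t < j) // ltnW //; apply: css.
  have := shadow_nextP (s := g) (j := j + i) (R' := (q i).2) csi.
  rewrite gq -surjective_pairing => /(_ shi)[shn gn]; split => //.
  have gS : g (j + i).+1 = (q i.+1).1 by rewrite -addnS gq.
  rewrite addnS.
  case: csi => i0 e0 ps css; split => //.
  - move=> t; rewrite /inb ltnS leq_eqVlt => /orP[/eqP->|]; last exact: ps.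
    by rewrite gS; left; case: shn.
  - move=> t; rewrite /inb ltnS leq_eqVlt => /orP[/eqP[->]|]; last exact: css.
    by rewrite gS gq /= shadow_next_stack.
have csN : consistent_search gv G sigma g None.
  have [_ [i0 e0 _ _]] := claim 0; split => // t _.
    by have [_ [_ _ ps _]] := claim t; apply: ps; rewrite /inb ltnS leq_addl.
  by have [_ [_ _ _ css]] := claim t.+1; apply: css; rewrite /inb addnS !ltnS leq_addl.
have [t _ et] := win_s g None csN (or_introl erefl).
have := search_set0_stable nV csN (t := t) (d := j) isT et; rewrite addnC gq.
have [[_ _ sRR' nw sk] _] := claim t.
have := win_nonempty nw (leq_trans (size_restrict _ _) sk).
by apply: contraNnot => /= e; rewrite -subset0 -e.
Qed.

Lemma win_restricted : exists n, winG' n [::] V'.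
Proof.
apply: NNPP => hn; have nw0 n : ~ winG' n [::] V' by move=> w; apply: hn; exists n.
have [R'1 p1 nw1] : exists2 R'1, is_gvpos gv G' [::] R'1 & forall n, ~ winG' n [::] R'1.
  case: (classic (is_gvpos gv G' [::] V')) => p0; first by exists V'.
  have sp := start_special p0.
  have al : allowed gv G' k m st [::] V' [::].
    split => //.
    - by exists set0; split => // _; split => //; apply: gvpos_set0.
    - by move=> _ R2 [/(_ sp)[_ [_ sR2 _]] _]; apply: subset_trans sR2 (subsetDl _ _).
  have [R'1 [[/(_ sp)[_ p] _] nw1]] := escape_move nw0 (leq0n k) al.
  by exists R'1.
have sR'1 : R'1 \subset V :\: letX [::] by apply: subset_trans (free_restrict sub [::]); case: p1.
case: (classic (is_gvpos gv G [::] V)) => pG.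
  apply: (@shadow_caught (fun _ => ([::], V)) 0 R'1); first by split => // t _; apply: start_pos.
  by split => //; apply: subset_trans sR'1 (subsetDl _ _).
have sp := start_special pG; have [strat _ _ _ _] := good.
have es : sigma [::] V = [::] by have [R [/(_ sp)[e _] _]] := strat [::] V (or_intror sp).
have p1G : is_gvpos gv G [::] (closure [::] R'1).
  by apply: gv_closure_gvpos => //; apply: gvpos_rooted sub (free_restrict sub [::]) p1.
pose s t : pos T := if t is 0 then ([::], V) else ([::], closure [::] R'1).
apply: (@shadow_caught s 1 R'1); last by split => //; apply: sub_gv_closure.
split => //.
- by case=> [|[|t]] //= _; [right|left].
- case=> [|t] //= _; rewrite es; split => //; split => // /(_ sp)[].
Qed.

End Simulation.

Lemma minnat_spec (P : nat -> Prop) : (exists k, P k) ->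
  P (minnat P) /\ forall j, P j -> minnat P <= j.
Proof.
move=> /ex_minn_prop ex.
exact: (epsilon_spec (inhabits 0) (fun k => P k /\ forall j, P j -> k <= j) ex).
Qed.

Lemma minnat_le (P Q : nat -> Prop) :
  (exists k, P k) -> (forall k, P k -> Q k) -> minnat Q <= minnat P.
Proof.
move=> exP PQ; have [/PQ QP _] := minnat_spec exP.
by have [_ ->] := minnat_spec (ex_intro _ _ QP).
Qed.

Section Monotonicity.
Variable T : finType.
Variables (gv : game_variant) (m st : bool).
Implicit Types (G : digraph T).

Lemma good_strategy_exists G : wf_digraph G ->
  exists k sigma, good_strategy gv G k m st sigma.
Proof.
case=> nV _ _; have [[|n] w] := win_start gv G m st => //.
exists #|dV G|, (canon_strategy gv G #|dV G| m st).
by apply: canon_strategy_good w => //; rewrite card_gt0.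
Qed.

Lemma good_strategy_subgraph G G' k sigma : wf_digraph G -> wf_digraph G' -> subgraph G' G ->
  good_strategy gv G k m st sigma -> exists sigma', good_strategy gv G' k m st sigma'.
Proof.
move=> [nV _ _] [nV' _ _] sub good; have k0 := good_strategy_k_gt0 good.
have [[|n] w] := win_restricted nV sub good => //.
by exists (canon_strategy gv G' k m st); apply: canon_strategy_good w.
Qed.

End Monotonicity.

Theorem proposition1 (T : finType) (G G' : digraph T) :
  wf_digraph G -> wf_digraph G' -> subgraph G' G ->
  sstat_vsc G' <= sstat_vsc G /\
  (forall (m : bool) (gv : game_variant), lifo m gv G' <= lifo m gv G).
Proof.
move=> wf wf' sub; split=> [|m gv]; apply: minnat_le.
- have [k [s [a b c _ e]]] := good_strategy_exists Vvsc false true wf.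
  by exists k, s; split => //; apply: e.
- move=> k [s [a b c d]]; have g : good_strategy Vvsc G k false true s by split.
  have [s' [a' b' c' _ e']] := good_strategy_subgraph wf wf' sub g.
  by exists s'; split => //; apply: e'.
- have [k [s [a b c d _]]] := good_strategy_exists gv m false wf.
  by exists k, s; split.
- move=> k [s [a b c d]]; have g : good_strategy gv G k m false s by split.
  have [s' [a' b' c' d' _]] := good_strategy_subgraph wf wf' sub g.
  by exists s'; split.
Qed.
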